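(* Let $G$ be a threshold graph with an odd number of vertices. If $h(\mathrm{seq}(G))=0$, then $G$ has a near-perfect matching, i.e., a matching covering all vertices but one.
   Context: A threshold graph on $n\ge1$ vertices is built from a base vertex $v_0$ by successively adding $v_1,\dots,v_{n-1}$, each either isolated (adjacent to no earlier vertex) or dominating (adjacent to all earlier vertices); its creation sequence $\mathrm{seq}(G)=s_1\cdots s_{n-1}$ has $s_i=1$ if $v_i$ is dominating and $s_i=0$ otherwise. For a binary string $s=s_1\cdots s_m$ and $0\le k\le m$, the $k$-th tail is $s_{m-k+1}\cdots s_m$ (empty for $k=0$); $z_k(s)$, $u_k(s)$ are the numbers of zeros and ones in it, and $h(s)=\max_{0\le k\le m}\{z_k(s)-u_k(s)\}$. *)

From mathcomp Require Import all_boot all_order all_algebra.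
Set Implicit Arguments. Unset Strict Implicit. Unset Printing Implicit Defensive.
Import Order.TTheory GRing.Theory Num.Theory.

(* Creation sequence s = s_1 ... s_{n-1} as a seq bool (true = 1 = dominating);
   s_i is [nth false s i.-1]. *)

Definition tail_k (s : seq bool) (k : nat) : seq bool := drop (size s - k) s.

Definition zk (s : seq bool) (k : nat) : nat := count negb (tail_k s k).
Definition uk (s : seq bool) (k : nat) : nat := count id (tail_k s k).

Definition hseq (s : seq bool) : int :=
  \big[Num.max/0%R]_(k < (size s).+1) ((zk s k)%:Z - (uk s k)%:Z)%R.

(* Threshold graph on vertices v_0..v_{n-1} (= 'I_n) with creation sequence s:
   for i < j, v_i v_j is an edge iff v_j is dominating, i.e. s_j = 1. *)
Definition tg_adj (n : nat) (s : seq bool) : rel 'I_n :=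
  fun i j => (i != j) &&
    (if (i < j)%N then nth false s (j.-1) else nth false s (i.-1)).

Definition is_matching (T : finType) (adj : rel T) (M : {set {set T}}) : bool :=
  trivIset M &&
  [forall e in M, exists x, exists y, (e == [set x; y]) && adj x y].

Definition near_perfect_matching (T : finType) (adj : rel T) (M : {set {set T}}) : Prop :=
  is_matching adj M /\ exists v : T, cover M = [set~ v].

(* Label v_0 as dominating too; then for i < j the vertices v_i, v_j are
   adjacent exactly when v_j is dominating, and h(seq G) = 0 says that every
   set of final vertices contains at least as many dominating as isolated
   ones.  Call a vertex set S balanced if this holds for its final segments.
   In a balanced S of odd size, match the last isolated vertex x of S with a
   dominating vertex y > x of S (one exists by balance), or any two vertices
   if S has no isolated vertex; S minus {x, y} is again balanced, so induction
   on |S| leaves a single vertex unmatched. *)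

From mathcomp Require Import all_boot all_order all_algebra.
From mathcomp Require Import zify.
Import Order.TTheory GRing.Theory Num.Theory.
Set Implicit Arguments. Unset Strict Implicit. Unset Printing Implicit Defensive.

Section NearPerfect.

Variables (T : finType) (adj : rel T).

Definition near_perfect_on (S : {set T}) :=
  exists M : {set {set T}}, is_matching adj M /\ exists2 v, v \in S & cover M = S :\ v.

Lemma near_perfect_on_set1 (v : T) : near_perfect_on [set v].
Proof.
exists set0; split; last by exists v; rewrite ?set11 // /cover big_set0 setDv.
apply/andP; split; first by apply/trivIsetP => A B; rewrite in_set0.
by apply/forallP => e; rewrite in_set0.
Qed.

Lemma near_perfect_on_setD2 (S : {set T}) (x y : T) :
  x \in S -> y \in S -> adj x y ->
  near_perfect_on (S :\ x :\ y) -> near_perfect_on S.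
Proof.
move=> xS yS xy [M [/andP [tM /forallP edgeM] [v vS cM]]].
have /and3P [vy vx {}vS] : [&& v != y, v != x & v \in S] by rewrite -!in_setD1.
have disj_xy : [disjoint [set x; y] & cover M].
  rewrite cM disjoints_subset; apply/subsetP => z.
  by rewrite !inE => /orP [] /eqP ->; rewrite eqxx ?andbF.
exists ([set [set x; y]] :|: M); split.
  apply/andP; split.
    by apply: trivIsetU; rewrite ?trivIset1 // /cover big_set1.
  apply/forallP => e; apply/implyP; rewrite !inE => /orP [/eqP -> | eM].
    by apply/existsP; exists x; apply/existsP; exists y; rewrite eqxx.
  exact: (implyP (edgeM e)).
exists v => //.
rewrite /cover bigcup_setU big_set1 -/(cover M) cM.
apply/setP => z; rewrite !inE.
case: (eqVneq z x) => [->|_]; first by rewrite (eq_sym x v) vx xS.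
by case: (eqVneq z y) => [->|_]; rewrite ?orbT // (eq_sym y v) vy yS.
Qed.

End NearPerfect.

Lemma cardsD2 (T : finType) (S : {set T}) (x y : T) :
  x != y -> x \in S -> y \in S -> #|S| = #|S :\ x :\ y| + 2.
Proof.
move=> xy xS yS; rewrite (cardsD1 x S) (cardsD1 y (S :\ x)) xS !inE yS eq_sym xy.
by rewrite addnA addnC.
Qed.

Lemma card_sepD2 (T : finType) (S : {set T}) (x y : T) (P : pred T) : x != y ->
  #|[set i in S | P i]|
    = #|[set i in S :\ x :\ y | P i]| + ((x \in S) && P x) + ((y \in S) && P y).
Proof.
move=> xy.
rewrite (cardsD1 x [set i in S | P i]) (cardsD1 y ([set i in S | P i] :\ x)).
have -> : [set i in S | P i] :\ x :\ y = [set i in S :\ x :\ y | P i].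
  by apply/setP => i; rewrite !inE; case: (i == y); case: (i == x).
rewrite !inE (negbTE (_ : y != x)) 1?eq_sym //=.
by case: (x \in S) (P x) (y \in S) (P y) => [] [] [] [] /=; lia.
Qed.

Definition dominating (s : seq bool) (i : nat) : bool := (i == 0) || nth false s i.-1.

Lemma tg_adj_dominating n s (i j : 'I_n) : i < j -> tg_adj s i j = dominating s j.
Proof.
move=> ij; rewrite /tg_adj ij /dominating (gtn_eqF (leq_ltn_trans (leq0n i) ij)).
by rewrite -val_eqE (ltn_eqF ij).
Qed.

Section Balanced.

Variables (n : nat) (s : seq bool).

Definition suffix_balanced (S : {set 'I_n}) := forall t : nat,
  #|[set i in S | (t <= i) && ~~ dominating s i]|
    <= #|[set i in S | (t <= i) && dominating s i]|.

Lemma suffix_balanced_all_dominating (S : {set 'I_n}) :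
  {in S, forall i : 'I_n, dominating s i} -> suffix_balanced S.
Proof.
move=> domS t; rewrite (_ : [set i in S | (t <= i) && ~~ _] = set0) ?cards0 //.
by apply/setP => i; rewrite !inE; case: (boolP (i \in S)) => [/domS ->|_]; rewrite ?andbF.
Qed.

(* Removing the last isolated vertex x and a later dominating y lowers both
   counts by one on every final segment reaching x, and leaves the
   isolated count at 0 on the others. *)
Lemma suffix_balancedD2 (S : {set 'I_n}) (x y : 'I_n) :
  x \in S -> y \in S -> x < y -> ~~ dominating s x -> dominating s y ->
  {in S, forall i : 'I_n, ~~ dominating s i -> i <= x} ->
  suffix_balanced S -> suffix_balanced (S :\ x :\ y).
Proof.
move=> xS yS xy isox domy lastx balS t.
have xy' : x != y by rewrite neq_ltn xy.
have := balS t.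
rewrite (card_sepD2 S (fun i => (t <= i) && ~~ dominating s i) xy').
rewrite (card_sepD2 S (fun i => (t <= i) && dominating s i) xy').
rewrite xS yS isox domy (negbTE isox) /= !andbF !andbT.
case: (leqP t x) => tx.
  by rewrite (leq_trans tx (ltnW xy)) /= !addn0 !addn1 ltnS.
move=> _; rewrite (_ : [set i in S :\ x :\ y | (t <= i) && ~~ _] = set0) ?cards0 //.
apply/setP => i; rewrite !inE; apply/negbTE/negP => /and3P [/and3P [_ _ iS] ti isoi].
by have := leq_ltn_trans (lastx i iS isoi) (leq_trans tx ti); rewrite ltnn.
Qed.

Lemma suffix_balanced_pair (S : {set 'I_n}) : 1 < #|S| -> suffix_balanced S ->
  exists x y : 'I_n, [/\ x \in S, y \in S, x < y, dominating s y
                        & suffix_balanced (S :\ x :\ y)].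
Proof.
move=> S2 balS.
pose isolatedS := [pred i in S | ~~ dominating s i].
case: (pickP isolatedS) => [i0 i0P | noiso].
  case: (arg_maxnP val i0P) => x /andP [xS isox] lastx.
  have /card_gt0P [y] : 0 < #|[set i in S | (x <= i) && dominating s i]|.
    by apply: leq_trans (balS x); apply/card_gt0P; exists x; rewrite !inE xS leqnn.
  rewrite !inE => /and3P [yS xy domy].
  have {}xy : x < y by rewrite ltn_neqAle xy andbT; apply: contraNneq isox => ->.
  exists x, y; split => //; apply: suffix_balancedD2 => // i iS isoi.
  by apply: lastx; apply/andP.
have domS : {in S, forall i : 'I_n, dominating s i}.
  by move=> i iS; move: (noiso i); rewrite /= iS => /negbFE.
have [x [y [xS yS xy]]] : exists x y : 'I_n, [/\ x \in S, y \in S & x != y].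
  have /card_gt0P [x xS] := ltnW S2.
  have /card_gt0P [y] : 0 < #|S :\ x| by move: S2; rewrite (cardsD1 x) xS.
  by rewrite !inE => /andP [yx yS]; exists x, y; rewrite eq_sym.
have balD2 a b : suffix_balanced (S :\ a :\ b).
  by apply: suffix_balanced_all_dominating => i; rewrite !inE => /and3P [_ _ /domS].
case: (ltngtP x y) => [lt_xy | lt_yx | /val_inj eq_xy]; last by rewrite eq_xy eqxx in xy.
  by exists x, y; split; rewrite ?domS.
by exists y, x; split; rewrite ?domS.
Qed.

Lemma suffix_balanced_near_perfect (S : {set 'I_n}) :
  odd #|S| -> suffix_balanced S -> near_perfect_on (@tg_adj n s) S.
Proof.
move=> oddS; have := odd_double_half #|S|; rewrite oddS.
move: {oddS}(#|S|./2) => k; elim: k S => [|k IH] S cardS balS.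
  have /cards1P [v ->] : #|S| == 1 by rewrite -cardS.
  exact: near_perfect_on_set1.
have [x [y [xS yS xy domy balD2]]] : exists x y : 'I_n, [/\ x \in S, y \in S, x < y,
    dominating s y & suffix_balanced (S :\ x :\ y)].
  by apply: suffix_balanced_pair; rewrite // -cardS doubleS.
apply: (near_perfect_on_setD2 xS yS); first by rewrite tg_adj_dominating.
have xy' : x != y by rewrite neq_ltn xy.
apply: IH balD2; move: cardS; rewrite (cardsD2 xy' xS yS).
by rewrite doubleS /= -addn2 addnA => /addIn.
Qed.

End Balanced.

Lemma hseq_eq0_tail (s : seq bool) k :
  hseq s = 0%R -> k <= size s -> zk s k <= uk s k.
Proof.
move=> h0 ks.
have := le_bigmax 0%R (fun k : 'I_(size s).+1 => ((zk s k)%:Z - (uk s k)%:Z)%R)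
  (Ordinal (ks : k < (size s).+1)).
by rewrite -/(hseq s) h0 subr_le0 lez_nat.
Qed.

Lemma card_set_ord_pred n (P : pred nat) :
  #|[set i : 'I_n | P i]| = count P (iota 0 n).
Proof.
rewrite -sum1_card (eq_bigl (fun i : 'I_n => P i)) => [|i]; last by rewrite inE.
by rewrite -(big_mkord P (fun _ => 1)) sum1_count /index_iota subn0.
Qed.

Lemma count_geq_iota t (P : pred nat) m k :
  count (fun i => (t <= i) && P i) (iota m k) = count P (drop (t - m) (iota m k)).
Proof.
elim: k m => [|k IH] m; first by case: (t - m).
rewrite /= IH; case: (leqP t m) => tm.
  by rewrite (_ : t - m = 0) 1?(_ : t - m.+1 = 0) ?drop0 //; lia.
by rewrite (_ : t - m = (t - m.+1).+1) //; lia.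
Qed.

Lemma map_dominating_iota s : map (dominating s) (iota 0 (size s).+1) = true :: s.
Proof.
rewrite /= /dominating eqxx /= -(addn0 1) iotaDl -map_comp.
by rewrite (eq_map (_ : _ \o addn 1 =1 nth false s)) ?map_nth_iota0 ?take_size.
Qed.

Lemma tails_suffix_balanced s :
  (forall k, k <= size s -> zk s k <= uk s k) ->
  suffix_balanced s [set: 'I_(size s).+1].
Proof.
move=> tails t.
have countT (P : pred bool) :
    #|[set i in [set: 'I_(size s).+1] | (t <= i) && P (dominating s i)]|
      = count P (drop t (true :: s)).
  rewrite -map_dominating_iota -map_drop count_map -[t in drop t](subn0 t).
  by rewrite -count_geq_iota -card_set_ord_pred; apply: eq_card => i; rewrite !inE.
rewrite (countT negb) (countT id) {countT}.
case: t => [|t] /=.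
  have := tails _ (leqnn _); rewrite /zk /uk /tail_k subnn drop0 => zu.
  by rewrite add0n (leq_trans zu) ?leq_addl.
case: (leqP t (size s)) => ts; last by rewrite drop_oversize ?(ltnW ts).
by have := tails (size s - t) (leq_subr _ _); rewrite /zk /uk /tail_k subKn.
Qed.

Theorem mainTheorem5 (n : nat) (s : seq bool) :
  odd n -> size s = n.-1 -> hseq s = 0%R ->
  exists M : {set {set 'I_n}}, near_perfect_matching (@tg_adj n s) M.
Proof.
move=> oddn sz h0.
have {sz}n_eq : n = (size s).+1 by rewrite sz prednK // lt0n; apply: contraTneq oddn => ->.
subst n.
have [M [matchM [v _ coverM]]] : near_perfect_on (@tg_adj _ s) [set: 'I_(size s).+1].
  apply: suffix_balanced_near_perfect; first by rewrite cardsT card_ord.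
  by apply: tails_suffix_balanced => k; apply: hseq_eq0_tail.
by exists M; split => //; exists v; rewrite coverM setTD.
Qed.
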